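(* Let $\alpha\in\mathbb{R}\setminus\mathbb{Q}$ with continued fraction convergents $p_s/q_s$, and let $n$ be an integer with $q_s\leq n<q_{s+1}$. Then $$D_\alpha(n)\geq(2n)^{-n}\,q_{s+1}^{-n/q_s}.$$
   Context: $D_\alpha(n)=\prod_{k=1}^n\operatorname{dist}(k\alpha,\mathbb{Z})$. Continued fractions: $\alpha=[a_0;a_1,a_2,\dots]$ with integers $a_j\geq1$ for $j\geq1$; convergents $p_s/q_s=[a_0;a_1,\dots,a_s]$ with $p_s=a_sp_{s-1}+p_{s-2}$, $q_s=a_sq_{s-1}+q_{s-2}$ for $s\geq1$, $p_0=a_0$, $q_0=1$, $p_{-1}=1$, $q_{-1}=0$. *)

From Stdlib Require Import Reals ZArith.
Open Scope R_scope.

Definition dist_Z (x : R) : R := Rmin (frac_part x) (1 - frac_part x).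

Fixpoint D (alpha : R) (n : nat) : R :=
  match n with
  | O => 1
  | S m => D alpha m * dist_Z (INR (S m) * alpha)
  end.

Fixpoint cf_x (alpha : R) (k : nat) : R :=
  match k with
  | O => alpha
  | S j => / frac_part (cf_x alpha j)
  end.

Definition cf_a (alpha : R) (k : nat) : Z := Int_part (cf_x alpha k).

(* Denominators of convergents: q_0 = 1, q_1 = a_1 (= a_1 q_0 + q_{-1}),
   q_{s+2} = a_{s+2} q_{s+1} + q_s. *)
Fixpoint cf_q (alpha : R) (s : nat) : Z :=
  match s with
  | O => 1%Z
  | S O => cf_a alpha 1
  | S (S k as k') => (cf_a alpha (S k') * cf_q alpha k' + cf_q alpha k)%Z
  end.

Definition irrational (alpha : R) : Prop :=
  ~ exists (p q : Z), q <> 0%Z /\ alpha = IZR p / IZR q.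

From Stdlib Require Import Reals ZArith Lia Lra Psatz.
Open Scope R_scope.

(* Put q = q_s and Q = q_(s+1). The convergent p = p_s satisfies
   q alpha - p = e t with e = ±1 and 1/(2Q) <= t < 1/Q. For 1 <= k <= n and any
   integer m, q (k alpha - m) = e (z + k t) with z an integer, and 0 < k t < 1 - t.
   Hence |z + k t| >= t, so every factor dist(k alpha) of D_alpha(n) is at least
   t/q >= 1/(2nQ). When q does not divide k, z = 0 is excluded because p and q are
   coprime, and z = -1 forces q | Q - k, whence |z + k t| = 1 - k t > (Q - k)/Q
   >= q/(2n); so these factors are at least 1/(2n). At most n/q values of k are
   multiples of q. *)

Lemma irrational_frac_part_pos (x : R) : irrational x -> 0 < frac_part x.
Proof.
  intros Hx. destruct (base_fp x) as [[Hpos | Hzero] _]; [exact Hpos |].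
  exfalso; apply Hx. exists (Int_part x), 1%Z. split; [lia |].
  unfold frac_part in Hzero. simpl. lra.
Qed.

Lemma irrational_inv_frac_part (x : R) :
  irrational x -> irrational (/ frac_part x).
Proof.
  intros Hx [a [b [Hb E]]]. apply Hx.
  pose proof (irrational_frac_part_pos x Hx) as Hf.
  assert (Ha : a <> 0%Z).
  { intros ->. rewrite Rdiv_0_l in E. apply Rinv_neq_0_compat in E; lra. }
  exists (Int_part x * a + b)%Z, a. split; [exact Ha |].
  assert (Ef : frac_part x = IZR b / IZR a).
  { rewrite <- (Rinv_inv (frac_part x)), E. field. split; apply not_0_IZR; assumption. }
  apply not_0_IZR in Ha. unfold frac_part in Ef. set (i := Int_part x) in *.
  replace x with (IZR i + IZR b / IZR a) by lra.
  rewrite plus_IZR, mult_IZR. field. exact Ha.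
Qed.

Lemma irrational_cf_x (alpha : R) (k : nat) :
  irrational alpha -> irrational (cf_x alpha k).
Proof.
  intros Halpha. induction k as [| k IH]; [exact Halpha |].
  exact (irrational_inv_frac_part _ IH).
Qed.

Lemma cf_x_succ_gt_1 (alpha : R) (k : nat) :
  irrational alpha -> 1 < cf_x alpha (S k).
Proof.
  intros Halpha. simpl. rewrite <- Rinv_1.
  pose proof (irrational_frac_part_pos _ (irrational_cf_x alpha k Halpha)).
  destruct (base_fp (cf_x alpha k)).
  apply Rinv_lt_contravar; lra.
Qed.

Lemma Int_part_ge_1 (x : R) : 1 < x -> (1 <= Int_part x)%Z.
Proof.
  intros Hx. destruct (base_Int_part x).
  assert (0 < IZR (Int_part x)) as Hpos by lra.
  apply lt_IZR in Hpos. lia.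
Qed.

Lemma cf_a_succ_ge_1 (alpha : R) (k : nat) :
  irrational alpha -> (1 <= cf_a alpha (S k))%Z.
Proof. intros Halpha. exact (Int_part_ge_1 _ (cf_x_succ_gt_1 alpha k Halpha)). Qed.

Fixpoint cf_p (alpha : R) (s : nat) : Z :=
  match s with
  | O => cf_a alpha 0
  | S O => (cf_a alpha 1 * cf_a alpha 0 + 1)%Z
  | S (S k as k') => (cf_a alpha (S k') * cf_p alpha k' + cf_p alpha k)%Z
  end.

Definition cf_p_prev (alpha : R) (s : nat) : Z :=
  match s with O => 1%Z | S k => cf_p alpha k end.

Definition cf_q_prev (alpha : R) (s : nat) : Z :=
  match s with O => 0%Z | S k => cf_q alpha k end.

Lemma cf_q_succ (alpha : R) (s : nat) :
  cf_q alpha (S s) = (cf_a alpha (S s) * cf_q alpha s + cf_q_prev alpha s)%Z.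
Proof. destruct s; simpl; [lia | reflexivity]. Qed.

Lemma cf_p_succ (alpha : R) (s : nat) :
  cf_p alpha (S s) = (cf_a alpha (S s) * cf_p alpha s + cf_p_prev alpha s)%Z.
Proof. destruct s; reflexivity. Qed.

Lemma cf_q_pos (alpha : R) (s : nat) : irrational alpha -> (0 < cf_q alpha s)%Z.
Proof.
  intros Halpha.
  enough (0 <= cf_q_prev alpha s /\ 0 < cf_q alpha s)%Z by tauto.
  induction s as [| s [IHprev IH]]; [simpl; lia |].
  split; [simpl; lia |].
  rewrite cf_q_succ. pose proof (cf_a_succ_ge_1 alpha s Halpha). nia.
Qed.

Lemma cf_q_prev_nonneg (alpha : R) (s : nat) :
  irrational alpha -> (0 <= cf_q_prev alpha s)%Z.
Proof.
  intros Halpha. destruct s; simpl; [lia |].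
  apply Z.lt_le_incl, cf_q_pos, Halpha.
Qed.

Definition cf_det (alpha : R) (s : nat) : Z :=
  (cf_q alpha s * cf_p_prev alpha s - cf_p alpha s * cf_q_prev alpha s)%Z.

Lemma cf_det_succ (alpha : R) (s : nat) :
  cf_det alpha (S s) = (- cf_det alpha s)%Z.
Proof. unfold cf_det. rewrite cf_q_succ, cf_p_succ. simpl. ring. Qed.

Lemma cf_det_unit (alpha : R) (s : nat) :
  cf_det alpha s = 1%Z \/ cf_det alpha s = (-1)%Z.
Proof.
  induction s as [| s IH]; [left; unfold cf_det; cbn [cf_q cf_p_prev cf_q_prev]; lia |].
  rewrite cf_det_succ. lia.
Qed.

Lemma cf_moebius (alpha : R) (s : nat) :
  irrational alpha ->
  alpha * (IZR (cf_q alpha s) * cf_x alpha (S s) + IZR (cf_q_prev alpha s)) =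
    IZR (cf_p alpha s) * cf_x alpha (S s) + IZR (cf_p_prev alpha s).
Proof.
  intros Halpha. induction s as [| s IH].
  - pose proof (irrational_frac_part_pos _ Halpha) as Hf.
    change (cf_x alpha 1) with (/ frac_part alpha).
    cbn [cf_q cf_q_prev cf_p cf_p_prev]. unfold cf_a, frac_part in *. simpl.
    field. lra.
  - set (y := cf_x alpha (S s)) in *.
    pose proof (irrational_frac_part_pos _ (irrational_cf_x alpha (S s) Halpha)) as Hf.
    assert (Ey : y = IZR (cf_a alpha (S s)) + frac_part y)
      by (unfold frac_part, cf_a; fold y; ring).
    change (cf_x alpha (S (S s))) with (/ frac_part y).
    rewrite cf_q_succ, cf_p_succ. simpl cf_q_prev. simpl cf_p_prev.
    rewrite !plus_IZR, !mult_IZR. rewrite Ey in IH.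
    set (a := IZR (cf_a alpha (S s))) in *. set (f := frac_part y) in *.
    assert (Hf0 : f <> 0) by (apply Rgt_not_eq; exact Hf).
    replace (alpha * ((a * IZR (cf_q alpha s) + IZR (cf_q_prev alpha s)) * / f
               + IZR (cf_q alpha s)))
      with (alpha * (IZR (cf_q alpha s) * (a + f) + IZR (cf_q_prev alpha s)) / f)
      by (field; exact Hf0).
    rewrite IH. field. exact Hf0.
Qed.

Lemma cf_q_le_succ (alpha : R) (s : nat) :
  irrational alpha -> (cf_q alpha s <= cf_q alpha (S s))%Z.
Proof.
  intros Halpha. rewrite cf_q_succ.
  pose proof (cf_a_succ_ge_1 alpha s Halpha).
  pose proof (cf_q_pos alpha s Halpha).
  pose proof (cf_q_prev_nonneg alpha s Halpha). nia.
Qed.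

(* The classical error formula [q_s alpha - p_s = ±1 / (q_s x_(s+1) + q_(s-1))],
   whose denominator lies in [(q_(s+1), 2 q_(s+1)]]. *)
Lemma cf_error (alpha : R) (s : nat) :
  irrational alpha ->
  exists t : R,
    IZR (cf_q alpha s) * alpha - IZR (cf_p alpha s) = IZR (cf_det alpha s) * t /\
    1 <= 2 * t * IZR (cf_q alpha (S s)) /\ t * IZR (cf_q alpha (S s)) < 1.
Proof.
  intros Halpha.
  set (x := cf_x alpha (S s)).
  set (den := IZR (cf_q alpha s) * x + IZR (cf_q_prev alpha s)).
  assert (Hden : den = IZR (cf_q alpha (S s)) + IZR (cf_q alpha s) * frac_part x).
  { unfold den, frac_part. rewrite cf_q_succ, plus_IZR, mult_IZR. unfold cf_a. fold x. ring. }
  pose proof (irrational_frac_part_pos _ (irrational_cf_x alpha (S s) Halpha)) as Hf.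
  fold x in Hf. destruct (base_fp x) as [_ Hf1].
  assert (Hq : 0 < IZR (cf_q alpha s)) by (apply IZR_lt, cf_q_pos, Halpha).
  assert (HqQ : IZR (cf_q alpha s) <= IZR (cf_q alpha (S s)))
    by (apply IZR_le, cf_q_le_succ, Halpha).
  assert (HQ_den : IZR (cf_q alpha (S s)) < den) by (rewrite Hden; nra).
  assert (Hden_2Q : den <= 2 * IZR (cf_q alpha (S s))) by (rewrite Hden; nra).
  assert (Hden0 : den <> 0) by (apply Rgt_not_eq; lra).
  exists (/ den). split; [| split].
  - apply (Rmult_eq_reg_r den); [| exact Hden0].
    replace ((IZR (cf_q alpha s) * alpha - IZR (cf_p alpha s)) * den)
      with (IZR (cf_q alpha s) * (alpha * den) - IZR (cf_p alpha s) * den) by ring.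
    pose proof (cf_moebius alpha s Halpha) as Hm. fold x den in Hm. rewrite Hm.
    rewrite Rmult_assoc, Rinv_l by exact Hden0.
    unfold den, cf_det. rewrite minus_IZR, !mult_IZR. ring.
  - apply (Rmult_le_reg_r den); [lra |].
    replace (2 * / den * IZR (cf_q alpha (S s)) * den)
      with (2 * IZR (cf_q alpha (S s))) by (field; exact Hden0). lra.
  - apply (Rmult_lt_reg_r den); [lra |].
    replace (/ den * IZR (cf_q alpha (S s)) * den)
      with (IZR (cf_q alpha (S s))) by (field; exact Hden0). lra.
Qed.

Lemma dist_Z_ge (x c : R) : (forall m : Z, c <= Rabs (x - IZR m)) -> c <= dist_Z x.
Proof.
  intros H. unfold dist_Z. destruct (base_Int_part x).
  apply Rmin_glb.
  - replace (frac_part x) with (Rabs (x - IZR (Int_part x)))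
      by (unfold frac_part; rewrite Rabs_right; lra).
    apply H.
  - replace (1 - frac_part x) with (Rabs (x - IZR (Int_part x + 1)))
      by (unfold frac_part; rewrite plus_IZR, Rabs_left1; lra).
    apply H.
Qed.

Lemma Rabs_IZR_add_ge_1 (z : Z) (u : R) :
  0 < u < 1 -> z <> 0%Z -> z <> (-1)%Z -> 1 <= Rabs (IZR z + u).
Proof.
  intros Hu Hz0 Hz1. destruct (Z_lt_le_dec z 0) as [Hneg | Hnn].
  - assert (IZR z <= -2) by (apply IZR_le; lia). rewrite Rabs_left1; lra.
  - assert (1 <= IZR z) by (apply IZR_le; lia). rewrite Rabs_right; lra.
Qed.

Section ConvergentApproximation.

Variables (alpha t : R) (sg p P q Q n : Z).
Hypothesis sg_unit : sg = 1%Z \/ sg = (-1)%Z.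
Hypothesis det_convergents : (Q * p - P * q = - sg)%Z.
Hypothesis error_q : IZR q * alpha - IZR p = IZR sg * t.
Hypothesis error_lower : 1 <= 2 * t * IZR Q.
Hypothesis error_upper : t * IZR Q < 1.
Hypothesis q_range : (1 <= q <= n)%Z.
Hypothesis n_lt_Q : (n < Q)%Z.

Lemma divide_q_of_divide_mul_p (c : Z) : (q | c * p)%Z -> (q | c)%Z.
Proof.
  intros Hdiv. apply (Z.gauss q p c); [rewrite Z.mul_comm; exact Hdiv |].
  apply Z.bezout_1_gcd. exists (sg * P)%Z, (- sg * Q)%Z.
  destruct sg_unit; subst sg; lia.
Qed.

Lemma scaled_error (k m : Z) :
  IZR q * Rabs (IZR k * alpha - IZR m) =
    Rabs (IZR (sg * (k * p - m * q)) + IZR k * t).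
Proof.
  assert (Ht : t = IZR sg * (IZR q * alpha - IZR p))
    by (destruct sg_unit; subst sg; simpl in *; lra).
  assert (Hq : 0 <= IZR q) by (apply IZR_le; lia).
  rewrite <- (Rabs_right (IZR q)) at 1 by lra. rewrite <- Rabs_mult.
  destruct sg_unit; subst sg; rewrite Ht, mult_IZR, minus_IZR, !mult_IZR; simpl.
  - f_equal. ring.
  - rewrite <- Rabs_Ropp. f_equal. ring.
Qed.

Lemma kt_range (k : Z) : (1 <= k <= n)%Z -> 0 < IZR k * t /\ (IZR k + 1) * t < 1.
Proof.
  intros Hk.
  assert (1 <= IZR k) by (apply IZR_le; lia).
  assert (IZR k + 1 <= IZR Q) by (rewrite <- plus_IZR; apply IZR_le; lia).
  split; nra.
Qed.

Lemma Rabs_mul_sub_ge (k m : Z) :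
  (1 <= k <= n)%Z -> / (2 * IZR n * IZR Q) <= Rabs (IZR k * alpha - IZR m).
Proof.
  intros Hk. destruct (kt_range k Hk) as [Hkt0 Hkt1].
  assert (Hk1 : 1 <= IZR k) by (apply IZR_le; lia).
  assert (Hq : 1 <= IZR q) by (apply IZR_le; lia).
  assert (Hqn : IZR q <= IZR n) by (apply IZR_le; lia).
  assert (HQ : 0 < IZR Q) by (apply IZR_lt; lia).
  assert (Ht : 0 < t) by nra.
  set (z := (sg * (k * p - m * q))%Z).
  assert (Hz : t <= Rabs (IZR z + IZR k * t)).
  { destruct (Z.eq_dec z 0) as [-> | Hz0]; [rewrite Rabs_right; simpl; nra |].
    destruct (Z.eq_dec z (-1)) as [-> | Hz1]; [rewrite Rabs_left1; simpl; nra |].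
    assert (Hu : 0 < IZR k * t < 1) by lra.
    pose proof (Rabs_IZR_add_ge_1 z (IZR k * t) Hu Hz0 Hz1). nra. }
  pose proof (scaled_error k m) as Hscaled. fold z in Hscaled.
  set (d := Rabs (IZR k * alpha - IZR m)) in *.
  assert (Hd : 0 <= d) by apply Rabs_pos.
  apply (Rmult_le_reg_l (2 * IZR n * IZR Q)); [nra |].
  rewrite Rinv_r by (apply Rgt_not_eq; nra).
  assert (IZR q * d <= IZR n * d) by (apply Rmult_le_compat_r; lra).
  nra.
Qed.

Lemma Rabs_mul_sub_ge_not_divide (k m : Z) :
  (1 <= k <= n)%Z -> ~ (q | k)%Z -> / (2 * IZR n) <= Rabs (IZR k * alpha - IZR m).
Proof.
  intros Hk Hndiv. destruct (kt_range k Hk) as [Hkt0 Hkt1].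
  assert (Hk1 : 1 <= IZR k) by (apply IZR_le; lia).
  assert (Hq : 1 <= IZR q) by (apply IZR_le; lia).
  assert (Hqn : IZR q <= IZR n) by (apply IZR_le; lia).
  assert (HQ : 0 < IZR Q) by (apply IZR_lt; lia).
  assert (Ht : 0 < t) by nra.
  set (z := (sg * (k * p - m * q))%Z).
  assert (Hz : IZR q <= 2 * IZR n * Rabs (IZR z + IZR k * t)).
  { destruct (Z.eq_dec z 0) as [Hz0 | Hz0].
    { exfalso. apply Hndiv, divide_q_of_divide_mul_p. exists m.
      unfold z in Hz0. destruct sg_unit; subst sg; lia. }
    destruct (Z.eq_dec z (-1)) as [Hz1 | Hz1].
    - (* [k p - m q = Q p - P q], so [q] divides [Q - k] *)
      assert (HqQk : (q <= Q - k)%Z).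
      { apply Z.divide_pos_le; [lia |]. apply divide_q_of_divide_mul_p.
        exists (P - m)%Z. unfold z in Hz1. destruct sg_unit; subst sg; nia. }
      assert (HZ : (q * Q <= 2 * n * (Q - k))%Z) by nia.
      apply IZR_le in HZ. rewrite !mult_IZR, minus_IZR in HZ.
      assert (IZR k * t * IZR Q < IZR k) by nra.
      rewrite Hz1, Rabs_left1; simpl; nra.
    - assert (Hu : 0 < IZR k * t < 1) by lra.
      pose proof (Rabs_IZR_add_ge_1 z (IZR k * t) Hu Hz0 Hz1). nra. }
  pose proof (scaled_error k m) as Hscaled. fold z in Hscaled.
  set (d := Rabs (IZR k * alpha - IZR m)) in *.
  apply (Rmult_le_reg_l (2 * IZR n)); [lra |].
  rewrite Rinv_r by (apply Rgt_not_eq; lra).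
  nra.
Qed.

End ConvergentApproximation.

Lemma Nat_div_succ_divide (n q : nat) :
  (0 < q)%nat -> Nat.divide q (S n) -> (S n / q = n / q + 1)%nat.
Proof.
  intros Hq Hdiv. apply Nat.Lcm0.mod_divide in Hdiv.
  pose proof (Nat.div_mod_eq n q). pose proof (Nat.div_mod_eq (S n) q).
  pose proof (Nat.mod_upper_bound n q ltac:(lia)). nia.
Qed.

Lemma Nat_div_succ_not_divide (n q : nat) :
  (0 < q)%nat -> ~ Nat.divide q (S n) -> (S n / q = n / q)%nat.
Proof.
  intros Hq Hndiv. rewrite <- Nat.Lcm0.mod_divide in Hndiv.
  pose proof (Nat.div_mod_eq n q). pose proof (Nat.div_mod_eq (S n) q).
  pose proof (Nat.mod_upper_bound n q ltac:(lia)).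
  pose proof (Nat.mod_upper_bound (S n) q ltac:(lia)). nia.
Qed.

Lemma D_ge_pow (alpha c Q : R) (q n : nat) :
  0 < c -> 1 <= Q -> (0 < q)%nat ->
  (forall k, (1 <= k <= n)%nat -> / (c * Q) <= dist_Z (INR k * alpha)) ->
  (forall k, (1 <= k <= n)%nat -> ~ Nat.divide q k -> / c <= dist_Z (INR k * alpha)) ->
  / c ^ n * / Q ^ (n / q) <= D alpha n.
Proof.
  intros Hc HQ Hq. induction n as [| n IH]; intros Hall Hndiv.
  - rewrite Nat.Div0.div_0_l. simpl. rewrite Rinv_1. lra.
  - assert (Hbound : / c ^ n * / Q ^ (n / q) <= D alpha n)
      by (apply IH; intros k Hk; [apply Hall | apply Hndiv]; lia).
    assert (Hpos : 0 < / c ^ n * / Q ^ (n / q))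
      by (apply Rmult_lt_0_compat; apply Rinv_0_lt_compat, pow_lt; lra).
    change (D alpha (S n)) with (D alpha n * dist_Z (INR (S n) * alpha)).
    destruct (Nat.eq_dec (S n mod q) 0) as [Hdiv | Hndiv_Sn];
      [apply Nat.Lcm0.mod_divide in Hdiv | rewrite Nat.Lcm0.mod_divide in Hndiv_Sn].
    + rewrite (Nat_div_succ_divide n q Hq Hdiv).
      replace (/ c ^ S n * / Q ^ (n / q + 1))
        with (/ c ^ n * / Q ^ (n / q) * / (c * Q))
        by (rewrite pow_add; simpl;
            field; repeat split; try apply pow_nonzero; apply Rgt_not_eq; lra).
      pose proof (Hall (S n) ltac:(lia)).
      apply Rmult_le_compat; try lra.
      apply Rlt_le, Rinv_0_lt_compat; nra.
    + rewrite (Nat_div_succ_not_divide n q Hq Hndiv_Sn).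
      replace (/ c ^ S n * / Q ^ (n / q)) with (/ c ^ n * / Q ^ (n / q) * / c)
        by (simpl; field; repeat split; try apply pow_nonzero; apply Rgt_not_eq; lra).
      pose proof (Hndiv (S n) ltac:(lia) Hndiv_Sn).
      apply Rmult_le_compat; try lra.
      apply Rlt_le, Rinv_0_lt_compat; lra.
Qed.

Lemma Rpower_opp_le_inv_pow (Q x : R) (m : nat) :
  1 <= Q -> INR m <= x -> Rpower Q (- x) <= / Q ^ m.
Proof.
  intros HQ Hm. rewrite Rpower_Ropp, <- Rpower_pow by lra.
  apply Rinv_le_contravar; [apply exp_pos | apply Rle_Rpower; lra].
Qed.

Theorem lemma2 (alpha : R) (s n : nat) :
  irrational alpha ->
  (cf_q alpha s <= Z.of_nat n)%Z ->
  (Z.of_nat n < cf_q alpha (S s))%Z ->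
  D alpha n >=
    / (2 * INR n) ^ n
    * Rpower (IZR (cf_q alpha (S s))) (- INR n / IZR (cf_q alpha s)).
Proof.
  intros Halpha Hqn HnQ.
  destruct (cf_error alpha s Halpha) as [t [Herror [Hlower Hupper]]].
  assert (Hdet : (cf_q alpha (S s) * cf_p alpha s - cf_p alpha (S s) * cf_q alpha s
                  = - cf_det alpha s)%Z) by (rewrite <- cf_det_succ; reflexivity).
  pose proof (cf_q_pos alpha s Halpha) as Hq.
  pose proof (cf_det_unit alpha s) as Hsg.
  set (q := cf_q alpha s) in *. set (Q := cf_q alpha (S s)) in *.
  set (qn := Z.to_nat q).
  assert (Eqn : Z.of_nat qn = q) by (apply Z2Nat.id; lia).
  assert (Hn : 0 < INR n) by (rewrite INR_IZR_INZ; apply IZR_lt; lia).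
  assert (HQ : 1 <= IZR Q) by (apply IZR_le; lia).
  apply Rle_ge, Rle_trans with (/ (2 * INR n) ^ n * / IZR Q ^ (n / qn)).
  - apply Rmult_le_compat_l; [apply Rlt_le, Rinv_0_lt_compat, pow_lt; lra |].
    rewrite Rdiv_opp_l. apply Rpower_opp_le_inv_pow; [exact HQ |].
    apply (Rmult_le_reg_r (IZR q)); [apply IZR_lt; lia |].
    unfold Rdiv. rewrite Rmult_assoc, Rinv_l, Rmult_1_r by (apply not_0_IZR; lia).
    rewrite <- Eqn, <- INR_IZR_INZ, <- mult_INR. apply le_INR.
    rewrite Nat.mul_comm. apply Nat.Div0.mul_div_le.
  - apply D_ge_pow; [lra | exact HQ | lia | |]; intros k Hk; [| intros Hndiv];
      apply dist_Z_ge; intros m; rewrite !INR_IZR_INZ.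
    + apply (Rabs_mul_sub_ge alpha t (cf_det alpha s) (cf_p alpha s) (cf_p alpha (S s)) q Q);
        auto; lia.
    + apply (Rabs_mul_sub_ge_not_divide alpha t (cf_det alpha s) (cf_p alpha s)
               (cf_p alpha (S s)) q Q); auto; try lia.
      intros Hdiv. apply Hndiv, Nat.Lcm0.mod_divide, Nat2Z.inj.
      rewrite Nat2Z.inj_mod, Eqn. apply Z.mod_divide; [lia | exact Hdiv].
Qed.
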